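(* Let $m>2$ be an even integer, $n\ge 1$ an integer, and let $M_{2mn}=\langle a,b : a^m=b^{2n}=1,\ bab^{-1}=a^{-1}\rangle$ be the metacyclic group of order $2mn$. Let $\Gamma_{M_{2mn}}$ be its non-commuting graph. Then the spectrum of the distance matrix $D(\Gamma_{M_{2mn}})$ (eigenvalues counted with multiplicity, multiplicities being added if two of the listed values coincide) consists of: (a) $-2$ with multiplicity $2n(m-1)-\frac{m}{2}-1$; (b) $2n-2$ with multiplicity $\frac{m}{2}-1$; (c) $\frac{-(2n-3mn+4)+n\sqrt{5m^2-20m+36}}{2}$ and $\frac{-(2n-3mn+4)-n\sqrt{5m^2-20m+36}}{2}$, each with multiplicity $1$.
   Context: For a finite non-abelian group $G$ with centre $Z(G)$, the non-commuting graph $\Gamma_G$ is the simple undirected graph with vertex set $G\setminus Z(G)$, in which two distinct vertices $u,v$ are adjacent if and only if $uv\ne vu$. For a connected graph $H$, $d_{uv}$ denotes the length of a shortest path between vertices $u$ and $v$, and the distance matrix $D(H)$ is the matrix whose $(u,v)$-entry is $d_{uv}$. *)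

From HB Require Import structures.
From mathcomp Require Import all_boot all_order all_algebra all_fingroup all_solvable.
Set Implicit Arguments. Unset Strict Implicit. Unset Printing Implicit Defensive.
Import GRing.Theory Num.Theory.

Definition nc_adj (gT : finGroupType) (V : {set gT}) : rel gT :=
  fun x y => [&& x \in V, y \in V & (x * y != y * x)%g].

Fixpoint walk (T : finType) (e : rel T) (k : nat) (x y : T) : bool :=
  match k with
  | 0 => x == y
  | k'.+1 => [exists z, e x z && walk e k' z y]
  end.

(* Shortest-path distance: least k with a walk of length k from x to y
   (every shortest walk has length < #|T|; for disconnected pairs the junk
   value #|T| is returned, which never arises for connected graphs). *)
Definition gdist (T : finType) (e : rel T) (x y : T) : nat :=
  find (fun k => walk e k x y) (iota 0 #|T|).

Definition nc_dist (gT : finGroupType) (G : {group gT}) : gT -> gT -> nat :=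
  gdist (nc_adj (G :\: 'Z(G))%g).

Definition nc_dist_matrix (R : nzRingType) (gT : finGroupType) (G : {group gT})
  : 'M[R]_#|(G :\: 'Z(G))%g| :=
  \matrix_(i, j) ((nc_dist G (enum_val i) (enum_val j))%:R : R)%R.

(* In M_2mn = <a, b> every element is uniquely a^i b^j (i < m, j < 2n), and
   b^j a^k b^-j is a^k or a^-k according to the parity of j.  Hence the centre
   is {a^i b^j : j even, i = 0 mod m/2}, and two noncentral elements commute
   iff they lie in the same block of the partition
     {a^i b^j : j even} minus the centre,
     {a^i b^j : j odd, i = r mod m/2}   (r < m/2),
   with one block of size (m - 2)n and m/2 blocks of size 2n.  The
   non-commuting graph is thus complete multipartite, with distances 0, 1, 2,
   and its distance matrix is U (J + I) U^T - 2 I for the block-incidence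
   matrix U.  Sylvester's identity det (s - AB) = s^(N-k) det (s - BA) reduces
   the characteristic polynomial, up to a power of X + 2, to a determinant of
   size m/2 + 1 whose matrix is a scalar minus a rank-two matrix; a second use
   of the identity leaves a 2 x 2 determinant, the quadratic factor. *)

From HB Require Import structures.
From mathcomp Require Import all_boot all_order all_algebra all_fingroup all_solvable.
From mathcomp Require Import zify ring.
Set Implicit Arguments. Unset Strict Implicit. Unset Printing Implicit Defensive.
Import GRing.Theory Num.Theory.

Section GraphDistance.
Variables (T : finType) (e : rel T).

Lemma walk1 x y : walk e 1 x y = e x y.
Proof.
apply/existsP/idP => [[z /andP[exz /eqP <-]] // | exy].
by exists y; rewrite exy eqxx.
Qed.

Lemma gdist_exact k x y : (k < #|T|)%N -> walk e k x y ->
  (forall j, (j < k)%N -> ~~ walk e j x y) -> gdist e x y = k.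
Proof.
move=> kT wk shorter; rewrite /gdist -(subnKC (ltnW kT)) iotaD find_cat.
have -> : has (fun j => walk e j x y) (iota 0 k) = false.
  by apply/hasP => -[j]; rewrite mem_iota add0n => /andP[_ /shorter/negbTE ->].
by rewrite size_iota add0n -[(#|T| - k)%N]prednK ?subn_gt0 //= wk addn0.
Qed.

Lemma gdist_complete_multipartite (V : {set T}) (K : eqType) (f : T -> K) :
  (2 < #|T|)%N ->
  {in V &, forall x y, e x y = (f x != f y)} ->
  {in V, forall x, exists2 z, z \in V & f z != f x} ->
  {in V &, forall x y,
    gdist e x y = if x == y then 0 else if f x == f y then 2 else 1}%N.
Proof.
move=> T_gt2 eV other_part x y xV yV.
case: eqVneq => [<-|xy]; first by apply: gdist_exact; [lia | rewrite /= eqxx | case].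
case: ifP => fxy; last first.
  by apply: gdist_exact; [lia | rewrite walk1 eV ?fxy | move=> [|//] _; rewrite /= xy].
have [z zV fzx] := other_part x xV.
apply: gdist_exact => //.
- apply/existsP; exists z; rewrite eV // eq_sym fzx -/(walk e 1 z y) walk1 eV //.
  by rewrite -(eqP fxy).
- move=> [_|[_|//]]; first by rewrite /= xy.
  by rewrite walk1 eV // fxy.
Qed.

End GraphDistance.

Section LinearAlgebra.
Local Open Scope ring_scope.

Lemma det_mx22 (R : comNzRingType) (M : 'M[R]_2) :
  \det M = M 0 0 * M 1 1 - M 0 1 * M 1 0.
Proof.
rewrite (expand_det_row _ 0) !big_ord_recl big_ord0 /cofactor !det_mx11 !mxE /=.
rewrite !(expr0, expr1, mul1r, addr0, mulN1r, mulrN).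
by congr (_ * _ - _ * _); congr (M _ _); apply/val_inj.
Qed.

(* Both sides equal [s ^+ N * \det (block_mx 1%:M A B s%:M)]: eliminate its
   lower-left, resp. upper-right, block. *)
Lemma det_sylvester (R : comNzRingType) N k (A : 'M[R]_(N, k)) (B : 'M[R]_(k, N))
    (s : R) :
  s ^+ N * \det (s%:M - B *m A) = s ^+ k * \det (s%:M - A *m B).
Proof.
pose X := block_mx 1%:M A B s%:M.
have detX : \det X = \det (s%:M - B *m A).
  have := det_mulmx (block_mx 1%:M 0 (- B) 1%:M) X.
  rewrite mulmx_block det_lblock !det1 mul1r !mul1mx !mul0mx !addr0 mulNmx.
  rewrite mulmx1 addNr mul1r => <-.
  by rewrite det_ublock det1 mul1r mulNmx addrC.
have := det_mulmx (block_mx s%:M (- A) 0 1%:M) X.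
rewrite det_ublock det_scalar det1 mulr1 detX => <-.
rewrite mulmx_block !mul0mx !mul1mx !add0r !mulNmx mulmx1.
by rewrite mul_scalar_mx mul_mx_scalar subrr det_lblock det_scalar mulrC.
Qed.

Lemma det_sylvester_cancel (R : idomainType) N k (A : 'M[R]_(N, k))
    (B : 'M[R]_(k, N)) (s : R) :
  s != 0 -> (k <= N)%N ->
  \det (s%:M - A *m B) = s ^+ (N - k) * \det (s%:M - B *m A).
Proof.
move=> s_neq0 le_kN; have := det_sylvester A B s.
have -> : s ^+ N = s ^+ k * s ^+ (N - k) by rewrite -exprD subnKC.
by rewrite -mulrA => /(mulfI (expf_neq0 k s_neq0)).
Qed.

Lemma trmx_rowsub1_mul (R : nzRingType) N k (f : 'I_N -> 'I_k) :
  (rowsub f 1%:M : 'M[R]_(N, k))^T *m rowsub f 1%:M =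
  diag_mx (\row_t #|[set i | f i == t]|%:R).
Proof.
apply/matrixP => t t'; rewrite !mxE.
under eq_bigr => i _ do rewrite !mxE -natrM.
under eq_bigr => i _ do rewrite mulnb.
case: eqVneq => [<- | ne]; rewrite ?mulr1n ?mulr0n.
  rewrite -sum1_card natr_sum [RHS]big_mkcond /=.
  by apply: eq_bigr => i _; rewrite inE andbb; case: (f i == t).
by rewrite big1 // => i _; case: eqVneq => // ->; rewrite (negbTE ne).
Qed.

(* [mxsub f f C = U *m C *m U^T] for the incidence matrix [U = rowsub f 1%:M]
   of the fibres of [f], and [U^T *m U] is the diagonal of the fibre sizes. *)
Lemma char_poly_blowup (R : idomainType) N k (f : 'I_N -> 'I_k) (C : 'M[R]_k)
    (d : R) :
  (k <= N)%N ->
  char_poly (mxsub f f C - d%:M) = ('X + d%:P) ^+ (N - k) *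
    \det (('X + d%:P)%:M -
          map_mx polyC (C *m diag_mx (\row_t #|[set i | f i == t]|%:R))).
Proof.
move=> le_kN; set U : 'M[{poly R}]_(N, k) := rowsub f 1%:M.
have UCU : map_mx polyC (mxsub f f C) = U *m (map_mx polyC C *m U^T).
  rewrite mulmxA mul_rowsub_mx mul1mx trmx_mxsub trmx1 mulmx_colsub mulmx1.
  by rewrite map_mxsub; apply/matrixP => i j; rewrite !mxE.
have X_neq0 : 'X + d%:P != 0 :> {poly R} by rewrite -size_poly_eq0 size_XaddC.
rewrite /char_poly /char_poly_mx map_mxB map_scalar_mx UCU opprB addrA -raddfD /=.
rewrite det_sylvester_cancel // -mulmxA trmx_rowsub1_mul map_mxM.
congr (_ * \det (_ - _ *m _)); apply/matrixP => t t'.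
by rewrite !mxE; case: (t == t'); rewrite /= ?mulr1n ?mulr0n ?rmorph_nat ?rmorph0.
Qed.

Lemma det_multipartite_quotient (R : idomainType) h (s p0 q : R) :
  (0 < h)%N -> s != q ->
  \det (s%:M - (const_mx 1 + 1%:M) *m
                 diag_mx (\row_(t < h.+1) if t == ord0 then p0 else q)) =
  (s - q) ^+ (h - 1) * ((s - p0) * (s - q - (p0 + q *+ h)) - (p0 - q) * p0).
Proof.
move=> h_gt0 s_neq_q; set w := \row_t _.
pose X : 'M[R]_(h.+1, 2) := \matrix_(t, u) if u == 0 then (t == ord0)%:R else 1.
pose Y : 'M[R]_(2, h.+1) :=
  \matrix_(u, t) if u == 0 then (t == ord0)%:R * (p0 - q) else w 0 t.
have -> : s%:M - (const_mx 1 + 1%:M) *m diag_mx w = (s - q)%:M - X *m Y.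
  apply/matrixP => t t'; rewrite mul_mx_diag !mxE !big_ord_recl big_ord0 !mxE /=.
  case: eqVneq => [<- | ne]; first by case: (t == ord0) => /=; ring.
  have [t0 | t0] := eqVneq t ord0; last by rewrite /=; ring.
  by move: ne; rewrite t0 eq_sym => /negbTE -> /=; ring.
rewrite det_sylvester_cancel ?subr_eq0 // det_mx22 !mxE !big_ord_recl !mxE /=.
have YX u v i :
    Y u (lift ord0 i) * X (lift ord0 i) v = if (u == 0) || (v == 0) then 0 else q.
  rewrite !mxE lift_eqF mul0r.
  by case: (u == 0); case: (v == 0); rewrite /= ?mulr0 ?mulr1.
rewrite !(eq_bigr _ (fun i _ => YX _ _ i)) /= !sumr_const !card_ord subn2 /= mul0rn.
by rewrite subn1; ring.
Qed.

Lemma char_poly_complete_multipartite_dist (R : idomainType) N h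
    (f : 'I_N -> 'I_h.+1) (p0 q : nat) (D : 'M[R]_N) :
  (0 < h)%N -> (h.+1 <= N)%N ->
  (forall t, #|[set i | f i == t]| = if t == ord0 then p0 else q) ->
  (forall i j, D i j = (if i == j then 0 else if f i == f j then 2 else 1)%:R) ->
  char_poly D =
    ('X + 2%:P) ^+ (N - h.+1) * ('X + 2%:P - q%:R) ^+ (h - 1) *
    (('X + 2%:P - p0%:R) * ('X + 2%:P - q%:R - (p0 + h * q)%:R)
     - (p0%:R - q%:R) * p0%:R).
Proof.
move=> h_gt0 le_hN card_part Dij.
have -> : D = mxsub f f (const_mx 1 + 1%:M) - 2%:M.
  apply/matrixP => i j; rewrite Dij !mxE.
  case: eqVneq => [-> | _]; first by rewrite eqxx /=; ring.
  by case: (f i == f j); rewrite /=; ring.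
rewrite char_poly_blowup //.
have -> : \row_t #|[set i | f i == t]|%:R =
          \row_t (if t == ord0 then p0 else q)%:R :> 'rV[R]_h.+1.
  by apply/rowP => t; rewrite !mxE card_part.
rewrite map_mxM map_mxD map_const_mx map_mx1 map_diag_mx rmorph1.
have -> : map_mx polyC (\row_t (if t == ord0 then p0 else q)%:R) =
          (\row_(t < h.+1) if t == ord0 then p0%:R else q%:R) :> 'rV[{poly R}]_h.+1.
  by apply/rowP => t; rewrite !mxE; case: (t == ord0); rewrite rmorph_nat.
rewrite det_multipartite_quotient //; last first.
  by rewrite -subr_eq0 -addrA -!polyC_natr -polyCB -size_poly_eq0 size_XaddC.
by rewrite natrD natrM; ring.
Qed.

End LinearAlgebra.

Lemma card_ord_set k (P : pred nat) : #|[set i : 'I_k | P i]| = count P (iota 0 k).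
Proof.
rewrite -sum1_card (eq_bigl (fun i : 'I_k => P i)) => [|i]; last by rewrite inE.
by rewrite -(big_mkord P (fun=> 1%N)) sum1_count /index_iota subn0.
Qed.

Lemma card_fibers_ord0 N h (f : 'I_N -> 'I_h.+1) (p0 q : nat) :
  (forall t, #|[set i | f i == t]| = if t == ord0 then p0 else q) ->
  N = (p0 + h * q)%N.
Proof.
move=> card_part.
have -> : N = (\sum_t #|[set i | f i == t]|)%N.
  rewrite -[N in LHS]card_ord -sum1_card (partition_big f xpredT) //=.
  by apply: eq_bigr => t _; rewrite -sum1_card; apply: eq_bigl => i; rewrite inE.
rewrite big_ord_recl card_part eqxx (eq_bigr (fun=> q)) => [|t _]; last first.
  by rewrite card_part lift_eqF.
by rewrite sum_nat_const card_ord mulnC.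
Qed.

Lemma count_odd_iota n : count odd (iota 0 (2 * n)) = n.
Proof.
elim: n => [|n IHn] //.
by rewrite mulnSr iotaD count_cat IHn /= mul2n odd_double addn1.
Qed.

Lemma count_mod_iota h r :
  (r < h)%N -> count (fun i => i %% h == r) (iota 0 h.*2) = 2.
Proof.
move=> lt_rh; rewrite -addnn iotaD count_cat add0n.
have -> : iota h h = map (addn h) (iota 0 h) by rewrite -iotaDl addn0.
rewrite count_map.
have count_r : count (fun i => i %% h == r) (iota 0 h) = 1%N.
  rewrite (@eq_in_count _ _ (pred1 r)) => [|i]; last first.
    by rewrite mem_iota add0n => /modn_small ->.
  by rewrite count_uniq_mem ?iota_uniq // mem_iota lt_rh.
rewrite (@eq_count _ _ (fun i => i %% h == r)) => [|i /=]; last by rewrite modnDl.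
by rewrite count_r.
Qed.

Lemma eqn_mod_double h x y :
  (0 < h)%N -> (x.*2 == y.*2 %[mod h.*2]) = (x == y %[mod h]).
Proof. by move=> h_gt0; rewrite -!muln2 -!muln_modl eqn_mul2r. Qed.

(* If [b a b^-1 = a^-1] and [a ^+ m = 1], then [b^j a^k b^-j = a^(twist m j k)]. *)
Definition twist m j k := if odd j then k * m.-1 else k.

Lemma eqn_mod_twist h i j k l : (0 < h)%N ->
  (i + twist h.*2 j k == k + twist h.*2 l i %[mod h.*2]) =
  if odd j then (if odd l then i == k %[mod h] else k %% h == 0)
  else (if odd l then i %% h == 0 else true).
Proof.
move=> h_gt0; rewrite /twist.
have [m1 def_m] : exists m1, h.*2 = m1.+1 by exists h.*2.-1; rewrite prednK ?double_gt0.
rewrite def_m /=; case: (odd j); case: (odd l).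
- rewrite -(eqn_modDr (i + k)).
  have -> : (i + k * m1 + (i + k) = k * m1.+1 + i.*2)%N by rewrite -addnn; nia.
  have -> : (k + i * m1 + (i + k) = i * m1.+1 + k.*2)%N by rewrite -addnn; nia.
  by rewrite !modnMDl -def_m eqn_mod_double.
- rewrite -(eqn_modDr k).
  have -> : (i + k * m1 + k = i + k * m1.+1)%N by nia.
  have -> : (k + i + k = i + k.*2)%N by rewrite -addnn; nia.
  by rewrite eqn_modDl -[k * m1.+1]addn0 modnMDl -def_m -double0 eqn_mod_double // mod0n.
- rewrite -(eqn_modDr i).
  have -> : (k + i * m1 + i = k + i * m1.+1)%N by nia.
  have -> : (i + k + i = k + i.*2)%N by rewrite -addnn; nia.
  by rewrite eqn_modDl -[i * m1.+1]addn0 modnMDl -def_m -double0 eqn_mod_double // mod0n.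
- by rewrite addnC eqxx.
Qed.

Lemma card_enum_val_set (T : finType) (A : {set T}) (P : pred T) :
  #|[set i : 'I_#|A| | P (enum_val i)]| = #|[set x in A | P x]|.
Proof.
rewrite -(card_imset _ enum_val_inj); apply: eq_card => x; rewrite [RHS]inE.
apply/imsetP/andP => [[i] | [xA Px]].
  by rewrite inE => Pi ->; split; [exact: enum_valP | ].
by exists (enum_rank_in xA x); rewrite ?inE enum_rankK_in.
Qed.

Lemma conjg_expg_inv (gT : finGroupType) (x y : gT) j :
  (x ^ y = x^-1)%g -> (x ^ (y ^+ j) = if odd j then x^-1 else x)%g.
Proof.
move=> xy; elim: j => [|j IHj]; first by rewrite conjg1.
by rewrite expgSr conjgM IHj /=; case: (odd j); rewrite /= ?conjVg xy ?invgK.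
Qed.

Lemma mulg_twist (gT : finGroupType) (x y : gT) m j k :
  (0 < m)%N -> (x ^+ m = 1)%g -> (y * x * y^-1 = x^-1)%g ->
  (y ^+ j * x ^+ k = x ^+ twist m j k * y ^+ j)%g.
Proof.
move=> m_gt0 xm yx; have xVy : (x ^ y^-1 = x^-1)%g by rewrite conjgE invgK mulgA yx.
rewrite conjgCV -expVgn conjXg conjg_expg_inv // /twist; case: (odd j) => //.
have -> : (x^-1 = x ^+ m.-1)%g by apply/eqP; rewrite eq_invg_mul -expgS prednK ?xm.
by rewrite -expgM mulnC.
Qed.

Section Metacyclic.
Local Open Scope group_scope.
Variables (gT : finGroupType) (G : {group gT}) (a b : gT) (h n : nat).
Hypotheses (h_gt1 : (1 < h)%N) (n_gt0 : (0 < n)%N) (defG : G :=: <<[set a; b]>>)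
  (a_order : a ^+ h.*2 = 1) (b_order : b ^+ (2 * n) = 1)
  (conj_ba : b * a * b^-1 = a^-1) (card_G : #|G| = (2 * h.*2 * n)%N).

Let h_gt0 : (0 < h)%N. Proof. exact: ltnW. Qed.
Let m_gt0 : (0 < h.*2)%N. Proof. by rewrite double_gt0. Qed.
Let m_gt1 : (1 < h.*2)%N. Proof. lia. Qed.
Let n2_gt0 : (0 < 2 * n)%N. Proof. by rewrite muln_gt0. Qed.
Let n2_gt1 : (1 < 2 * n)%N. Proof. lia. Qed.

Let idx := ('I_h.*2 * 'I_(2 * n))%type.

Definition word (p : idx) := a ^+ p.1 * b ^+ p.2.

Lemma word_in_G p : word p \in G.
Proof.
have [aG bG] : a \in G /\ b \in G by rewrite defG !mem_gen // !inE eqxx ?orbT.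
by rewrite groupM ?groupX.
Qed.

Lemma G_word x : x \in G -> exists p, x = word p.
Proof.
have nab : <[b]> \subset 'N(<[a]>).
  rewrite cycle_subG -groupV; apply/normP.
  by rewrite -cycleJ conjgE invgK mulgA conj_ba cycleV.
have : G \subset <[a]> * <[b]>.
  rewrite -norm_joinEr // defG gen_subG; apply/subsetP => y.
  by rewrite !inE => /orP[]/eqP->; rewrite mem_gen // inE cycle_id ?orbT.
move=> /subsetP sGab /sGab /mulsgP[_ _ /cycleP[i ->] /cycleP[j ->] ->].
exists (Ordinal (ltn_pmod i m_gt0), Ordinal (ltn_pmod j n2_gt0)).
by rewrite /word /= !expg_mod.
Qed.

Lemma word_inj : injective word.
Proof.
have defGw : G :=: word @: setT.
  apply/setP => x; apply/idP/imsetP => [/G_word[p ->] | [p _ ->]].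
    by exists p.
  exact: word_in_G.
have /imset_injP inj : #|word @: setT| == #|[set: idx]|.
  by rewrite -defGw card_G cardsT card_prod !card_ord mulnCA mulnA.
by move=> p q; apply: inj; rewrite inE.
Qed.

Lemma eq_expg_a u v : (a ^+ u == a ^+ v) = (u == v %[mod h.*2]).
Proof.
apply/eqP/eqP => [auv | uv]; last by rewrite -(expg_mod u a_order) uv expg_mod.
have /word_inj/(congr1 (fun p : idx => val p.1)) /= :
    word (Ordinal (ltn_pmod u m_gt0), Ordinal n2_gt0) =
    word (Ordinal (ltn_pmod v m_gt0), Ordinal n2_gt0).
  by rewrite /word /= !(expg_mod _ a_order) auv.
by [].
Qed.

Lemma commute_word p q : (word p * word q == word q * word p) =
  (p.1 + twist h.*2 p.2 q.1 == q.1 + twist h.*2 q.2 p.1 %[mod h.*2]).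
Proof.
have mul_word r s : word r * word s =
    a ^+ (r.1 + twist h.*2 r.2 s.1) * b ^+ (r.2 + s.2).
  rewrite /word mulgA -(mulgA (a ^+ r.1)) (mulg_twist _ _ m_gt0 a_order conj_ba).
  by rewrite mulgA -!expgD -mulgA -expgD.
by rewrite !mul_word (addnC q.2) (inj_eq (mulIg _)) eq_expg_a.
Qed.

Definition central_word (p : idx) := ~~ odd p.2 && (p.1 %% h == 0).

(* Block [ord0] is [<a, b^2>] minus the centre; block [r.+1] gathers the
   [a^i b^j] with [j] odd and [i = r mod h]. *)
Definition part (p : idx) : 'I_h.+1 :=
  if odd p.2 then inord (p.1 %% h).+1 else ord0.

Let inordS_eq0 x : (x < h)%N -> (inord x.+1 == ord0 :> 'I_h.+1) = false.
Proof. by move=> lt_xh; rewrite -val_eqE /= inordK. Qed.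

Lemma center_word p : (word p \in 'Z(G)) = central_word p.
Proof.
case: p => i j; apply/centerP/idP => [[_ cent] | ].
  apply: contraT; rewrite /central_word /= negb_and negbK.
  case odd_j : (odd j) => /= ncent.
    have /eqP := cent _ (word_in_G (Ordinal m_gt1, Ordinal n2_gt0)).
    by rewrite commute_word eqn_mod_twist //= odd_j /= modn_small.
  have /eqP := cent _ (word_in_G (Ordinal m_gt0, Ordinal n2_gt1)).
  by rewrite commute_word eqn_mod_twist //= odd_j (negbTE ncent).
case/andP => even_j /eqP i0; split=> [|_ /G_word[q ->]]; first exact: word_in_G.
by apply/eqP; rewrite commute_word eqn_mod_twist // (negbTE even_j) i0; case: ifP.
Qed.

Lemma commute_word_part p q : ~~ central_word p -> ~~ central_word q ->
  (word p * word q == word q * word p) = (part p == part q).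
Proof.
rewrite commute_word eqn_mod_twist // /central_word /part.
case: p q => [i j] [k l] /=; case: (odd j); case: (odd l) => //= ncent_i ncent_k.
- by rewrite -val_eqE /= !inordK ?ltnS ?ltn_pmod.
- by rewrite (negbTE ncent_k) inordS_eq0 ?ltn_pmod.
- by rewrite (negbTE ncent_i) eq_sym inordS_eq0 ?ltn_pmod.
Qed.

Lemma card_part t : #|[set p | ~~ central_word p && (part p == t)]| =
  if t == ord0 then ((h.*2 - 2) * n)%N else (2 * n)%N.
Proof.
case: eqVneq => [-> | t_neq0].
  have -> : [set p | ~~ central_word p && (part p == ord0)] =
      setX [set i : 'I_h.*2 | i %% h != 0] [set j : 'I_(2 * n) | ~~ odd j].
    apply/setP => -[i j]; rewrite !inE /central_word /part /=.
    by case: (odd j); rewrite /= ?inordS_eq0 ?ltn_pmod ?andbT ?andbF.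
  rewrite cardsX (card_ord_set _ (predC (fun i => i %% h == 0))).
  rewrite (card_ord_set _ (predC odd)).
  have := count_predC (fun i => i %% h == 0) (iota 0 h.*2).
  have := count_predC odd (iota 0 (2 * n)).
  rewrite count_mod_iota // count_odd_iota !size_iota; lia.
have t_gt0 : (0 < t)%N.
  by rewrite lt0n; apply: contra t_neq0 => /eqP t0; apply/eqP/val_inj.
have -> : [set p | ~~ central_word p && (part p == t)] =
    setX [set i : 'I_h.*2 | i %% h == t.-1] [set j : 'I_(2 * n) | odd j].
  apply/setP => -[i j]; rewrite !inE /central_word /part /=.
  case: (odd j) => /=; last by rewrite [ord0 == t]eq_sym (negbTE t_neq0) !andbF.
  by rewrite -val_eqE /= inordK ?ltnS ?ltn_pmod // andbT; case: (nat_of_ord t) t_gt0.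
rewrite cardsX (card_ord_set _ (fun i => i %% h == t.-1)) (card_ord_set _ odd).
by rewrite count_mod_iota ?count_odd_iota // -ltnS prednK.
Qed.

(* The value [ord0] outside [G] is never used. *)
Definition word_part x : 'I_h.+1 :=
  if [pick p | word p == x] is Some p then part p else ord0.

Lemma word_partE p : word_part (word p) = part p.
Proof.
by rewrite /word_part; case: pickP => [q /eqP/word_inj -> // | /(_ p)]; rewrite eqxx.
Qed.

Lemma word_noncentral p : (word p \in G :\: 'Z(G)) = ~~ central_word p.
Proof. by rewrite in_setD center_word word_in_G andbT. Qed.

Lemma noncentral_word x :
  x \in G :\: 'Z(G) -> exists2 p, x = word p & ~~ central_word p.
Proof.
rewrite in_setD => /andP[xZ /G_word[p def_x]].
by exists p; rewrite // -center_word -def_x.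
Qed.

Lemma nc_dist_metacyclic : {in G :\: 'Z(G) &, forall x y, nc_dist G x y =
  if x == y then 0 else if word_part x == word_part y then 2 else 1}%N.
Proof.
apply: gdist_complete_multipartite.
- apply: leq_trans (max_card (mem G)); rewrite card_G; nia.
- move=> x y /noncentral_word[p -> ncp] /noncentral_word[q -> ncq].
  by rewrite /nc_adj !word_noncentral ncp ncq /= commute_word_part // !word_partE.
move=> x /noncentral_word[p -> ncp]; rewrite word_partE.
have [-> | p_neq0] := eqVneq (part p) ord0.
  exists (word (Ordinal m_gt0, Ordinal n2_gt1)); rewrite ?word_noncentral ?word_partE //.
  by rewrite /part /= mod0n inordS_eq0.
exists (word (Ordinal m_gt1, Ordinal n2_gt0)); rewrite ?word_noncentral ?word_partE.
  by rewrite /central_word /= modn_small.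
by rewrite eq_sym.
Qed.

Lemma card_noncentral_part t : #|[set x in G :\: 'Z(G) | word_part x == t]| =
  if t == ord0 then ((h.*2 - 2) * n)%N else (2 * n)%N.
Proof.
rewrite -card_part -(card_imset _ word_inj); apply: eq_card => x.
rewrite [LHS]inE; apply/andP/imsetP => [[/noncentral_word[p -> ncp] pt] | [p]].
  by exists p; rewrite // inE ncp -word_partE.
by rewrite inE => /andP[ncp pt] ->; rewrite word_noncentral word_partE.
Qed.

Lemma char_poly_nc_dist_metacyclic (R : idomainType) :
  char_poly (nc_dist_matrix R G) =
   (('X + 2%:P) ^+ (2 * n * (h.*2 - 1) - h - 1) *
    ('X + 2%:P - (2 * n)%:R) ^+ (h - 1) *
    (('X + 2%:P - ((h.*2 - 2) * n)%:R) *
       ('X + 2%:P - (2 * n)%:R - ((h.*2 - 2) * n + h * (2 * n))%:R)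
     - (((h.*2 - 2) * n)%:R - (2 * n)%:R) * ((h.*2 - 2) * n)%:R))%R.
Proof.
set V := G :\: 'Z(G).
pose f (i : 'I_#|V|) := word_part (enum_val i).
have card_f t : #|[set i | f i == t]| =
    if t == ord0 then ((h.*2 - 2) * n)%N else (2 * n)%N.
  by rewrite (card_enum_val_set V (fun x => word_part x == t)) card_noncentral_part.
have card_V := card_fibers_ord0 card_f.
have -> : (2 * n * (h.*2 - 1) - h - 1 = #|V| - h.+1)%N by rewrite card_V; nia.
apply: char_poly_complete_multipartite_dist card_f _ => // [|i j].
  by rewrite card_V; nia.
by rewrite mxE nc_dist_metacyclic ?enum_valP // (inj_eq enum_val_inj).
Qed.

End Metacyclic.

Local Open Scope ring_scope.

Lemma mul_XsubC_quadratic (F : fieldType) (B C d : F) :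
  2 != 0 :> F -> d ^+ 2 = B ^+ 2 - 4 * C ->
  ('X - ((- B + d) / 2)%:P) * ('X - ((- B - d) / 2)%:P) =
  'X ^+ 2 + B%:P * 'X + C%:P.
Proof.
move=> two_neq0 disc.
have four_neq0 : 4 != 0 :> F by rewrite -[4]/(2 * 2)%:R natrM mulf_neq0.
have sum_roots : (- B + d) / 2 + (- B - d) / 2 = - B by field.
have prod_roots : (- B + d) / 2 * ((- B - d) / 2) = C.
  have -> : (- B + d) / 2 * ((- B - d) / 2) = (B ^+ 2 - d ^+ 2) / 4.
    by field; rewrite four_neq0.
  by rewrite disc; field.
have expand r1 r2 : ('X - r1%:P) * ('X - r2%:P) =
    'X ^+ 2 - (r1 + r2)%:P * 'X + (r1 * r2)%:P :> {poly F}.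
  by rewrite rmorphD rmorphM /=; ring.
by rewrite expand sum_roots prod_roots rmorphN mulNr opprK.
Qed.

Theorem theorem6p2 (R : rcfType) (m n : nat) (gT : finGroupType)
  (G : {group gT}) (a b : gT) :
  (2 < m)%N -> ~~ odd m -> (1 <= n)%N ->
  G :=: <<[set a; b]>>%g ->
  (a ^+ m = 1)%g -> (b ^+ (2 * n) = 1)%g -> (b * a * b^-1 = a^-1)%g ->
  #|G| = (2 * m * n)%N ->
  char_poly (nc_dist_matrix R G) =
    ('X + 2%:P) ^+ (2 * n * (m - 1) - m./2 - 1)
    * ('X - (2 * n%:R - 2)%:P) ^+ (m./2 - 1)
    * ('X - ((- (2 * n%:R - 3 * m%:R * n%:R + 4)
              + n%:R * Num.sqrt (5 * m%:R ^+ 2 - 20 * m%:R + 36)) / 2)%:P)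
    * ('X - ((- (2 * n%:R - 3 * m%:R * n%:R + 4)
              - n%:R * Num.sqrt (5 * m%:R ^+ 2 - 20 * m%:R + 36)) / 2)%:P).
Proof.
move=> m_gt2 m_even n_gt0 defG a_order b_order conj_ba card_G.
have [h def_m] : exists h, m = h.*2.
  by exists m./2; rewrite -[m in LHS]odd_double_half (negbTE m_even).
subst m; have h_gt1 : (1 < h)%N by lia.
rewrite (char_poly_nc_dist_metacyclic h_gt1 n_gt0 defG a_order b_order conj_ba card_G).
rewrite doubleK -!mulrA; congr (_ * (_ * _)).
  by congr (_ ^+ _); rewrite rmorphB rmorphM /= !polyC_natr natrM; ring.
have h2_ge2 : (2 <= h * 2)%N by lia.
rewrite -!muln2 !natrD !natrM !natrB // !natrM; set d := Num.sqrt _.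
rewrite (@mul_XsubC_quadratic _ _
  ((2 - (h%:R * 2 - 2) * n%:R) * (2 - 2 * (h%:R * 2) * n%:R)
   - (h%:R * 2 - 4) * (h%:R * 2 - 2) * n%:R ^+ 2)) ?pnatr_eq0 //.
  by rewrite !(rmorph_nat, rmorphB, rmorphD, rmorphM) /=; ring.
rewrite exprMn sqr_sqrtr; first by ring.
have -> : 5 * (h%:R * 2) ^+ 2 - 20 * (h%:R * 2) + 36 =
          5 * (h%:R * 2 - 2) ^+ 2 + 16 :> R by ring.
by apply: addr_ge0; [apply: mulr_ge0; [exact: ler0n | exact: sqr_ge0] | exact: ler0n].
Qed.
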